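(* Let $\Gamma$ be a Deza graph with parameters $(n,k,k-1,a)$, $k>1$, $\beta=1$. For any $NA$-vertex $x$, the vertex $x'$ is an $NA$-vertex.
   Context: A Deza graph with parameters $(n,k,b,a)$, $a\le b$, is a $k$-regular graph on $n$ vertices in which any two distinct vertices have $a$ or $b$ common neighbours; $\beta$ is the number of vertices $u\ne v$ with exactly $b$ common neighbours with a given vertex $v$. Since $\beta=1$, for each vertex $x$ let $x_b$ denote the unique vertex having $b=k-1$ common neighbours with $x$. A vertex $x$ is an $A$-vertex if $x$ is adjacent to $x_b$, and an $NA$-vertex otherwise. For an $NA$-vertex $x$, $x'$ denotes the unique neighbour of $x$ not adjacent to $x_b$. *)

From mathcomp Require Import all_boot.
Set Implicit Arguments. Unset Strict Implicit. Unset Printing Implicit Defensive.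

Definition simple_graph (T : finType) (e : rel T) : Prop :=
  symmetric e /\ irreflexive e.

Definition common (T : finType) (e : rel T) (x y : T) : nat :=
  #|[set z | e x z && e y z]|.

Definition deza_graph (T : finType) (e : rel T) (n k b a : nat) : Prop :=
  [/\ simple_graph e, #|T| = n, a <= b,
      forall x : T, #|[set y | e x y]| = k &
      forall x y : T, x != y -> common e x y = a \/ common e x y = b].

Definition beta (T : finType) (e : rel T) (b : nat) (v : T) : nat :=
  #|[set u | (u != v) && (common e u v == b)]|.

(* x_b : the (unique, when beta = 1) vertex with b common neighbours with x *)
Definition xb (T : finType) (e : rel T) (b : nat) (x : T) : T :=
  odflt x [pick y | (y != x) && (common e x y == b)].

Definition A_vertex (T : finType) (e : rel T) (b : nat) (x : T) : bool :=
  e x (xb e b x).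

Definition NA_vertex (T : finType) (e : rel T) (b : nat) (x : T) : bool :=
  ~~ A_vertex e b x.

From mathcomp Require Import all_boot.
From mathcomp Require Import zify.
Set Implicit Arguments. Unset Strict Implicit. Unset Printing Implicit Defensive.

(* If a vertex [w] of degree [k] shares [k - 1] neighbours with [v], then all
   neighbours of [w] but one are adjacent to [v].  Suppose [x'] were an
   A-vertex with [z := x'_b].  Then [z ~ x] unless [z = x], and [z = x] is
   excluded because [x_b] is unique and [x ~ x'] while [x] is not adjacent
   to [x_b].  Hence [z] is a neighbour of [x] other than [x'], so [z ~ x_b];
   finally [x_b] is a neighbour of [z] other than [x'], so [x' ~ x_b],
   contradicting the choice of [x']. *)

Lemma commonC (T : finType) (e : rel T) (x y : T) :
  symmetric e -> common e x y = common e y x.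
Proof. by move=> sym; apply: eq_card => u; rewrite !inE andbC. Qed.

Lemma adj_of_common_pred (T : finType) (e : rel T) (k : nat) (w v p u : T) :
  #|[set y | e w y]| = k -> common e w v = k - 1 -> e w p -> ~~ e v p ->
  e w u -> u != p -> e v u.
Proof.
move=> deg_w cwv ewp nevp ewu up.
have sub : [set z | e w z && e v z] \subset [set z | e w z] :\ p.
  apply/subsetP => z; rewrite !inE => /andP[-> evz]; rewrite andbT.
  by apply: contraTneq evz => ->.
have card_sub : #|[set z | e w z] :\ p| = k - 1.
  by have := cardsD1 p [set z | e w z]; rewrite deg_w inE ewp /=; lia.
have eq_sub : [set z | e w z && e v z] = [set z | e w z] :\ p.
  by apply/eqP; rewrite eqEcard sub card_sub -cwv leqnn.
have : u \in [set z | e w z] :\ p by rewrite !inE up ewu.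
by rewrite -eq_sub inE => /andP[].
Qed.

Section UniqueBVertex.

Variables (T : finType) (e : rel T) (b : nat).
Hypothesis sym : symmetric e.

Lemma beta_set1 (x : T) : beta e b x = 1 ->
  [set u | (u != x) && (common e x u == b)] = [set xb e b x].
Proof.
move=> /eqP/cards1P[s hs].
have hs' : [set u | (u != x) && (common e x u == b)] = [set s].
  by rewrite -hs; apply/setP => u; rewrite !inE commonC.
suff -> : xb e b x = s by [].
rewrite /xb; case: pickP => [y hy | none] /=.
  by apply/set1P; rewrite -hs' inE hy.
by have := set11 s; rewrite -hs' inE none.
Qed.

Lemma common_xb (x : T) : beta e b x = 1 -> common e x (xb e b x) = b.
Proof.
by move=> /beta_set1 hx; have := set11 (xb e b x); rewrite -hx inE => /andP[_ /eqP].
Qed.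

Lemma xb_unique (x u : T) : beta e b x = 1 ->
  u != x -> common e x u = b -> u = xb e b x.
Proof.
move=> /beta_set1 hx ux cxu; apply/set1P.
by rewrite -hx inE ux cxu eqxx.
Qed.

End UniqueBVertex.

Theorem lemma9 (T : finType) (e : rel T) (n k a : nat) :
  deza_graph e n k (k - 1) a -> 1 < k ->
  (forall v : T, beta e (k - 1) v = 1) ->
  forall x x' : T, NA_vertex e (k - 1) x ->
  (* x' is a (by the paper: the unique) neighbour of x not adjacent to x_b *)
  e x x' -> ~~ e x' (xb e (k - 1) x) ->
  NA_vertex e (k - 1) x'.
Proof.
case=> [[sym irr] _ _ deg _] _ hbeta x x' nax exx' nex'y.
rewrite /NA_vertex /A_vertex in nax *.
set y := xb e (k - 1) x in nax nex'y *; set z := xb e (k - 1) x'.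
have cxy := common_xb sym (hbeta x).
have cx'z := common_xb sym (hbeta x').
apply/negP => ex'z.
have x'y : x' != y by apply: contraNneq nax => <-.
have zx : z != x.
  apply: contra x'y => /eqP zx; apply/eqP/(xb_unique sym (hbeta x)).
  - by apply: contraTneq exx' => ->; rewrite irr.
  - by rewrite commonC // -zx.
have ezx : e z x.
  apply: (adj_of_common_pred (deg x') cx'z ex'z (negbT (irr z))).
  - by rewrite sym.
  - by rewrite eq_sym.
have eyz : e y z.
  apply: (adj_of_common_pred (deg x) cxy exx').
  - by rewrite sym.
  - by rewrite sym.
  - by apply: contraTneq ex'z => ->; rewrite irr.
have ex'y : e x' y.
  apply: (adj_of_common_pred (deg z) _ _ (negbT (irr x'))).
  - by rewrite commonC.
  - by rewrite sym.
  - by rewrite sym.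
  - by rewrite eq_sym.
by rewrite ex'y in nex'y.
Qed.
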